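(* Let $T$ be a collection of $3$-element subsets of $[n]$ and let $\mathcal{A}=\{U_{ijk}:\{i,j,k\}\in T\}$, a subarrangement of the $3$-equal arrangement in $\mathbb{R}^n$. Then $\mathcal{A}$ intersects every chamber of the real braid arrangement $\mathcal{B}_n$ in a codimension-$2$ subcomplex (so that, by the theorem of Davis–Januszkiewicz–Scott, the complement $\mathcal{M}_\mathcal{A}=\mathbb{R}^n-\bigcup_{H\in\mathcal{A}}H$ is a $K(\pi,1)$ space) if and only if every permutation $w=w_1w_2\cdots w_n$ of $[n]$ has some consecutive triple in $T$, i.e. there is $j$ with $\{w_j,w_{j+1},w_{j+2}\}\in T$.
   Context: $U_{ijk}=\{u\in\mathbb{R}^n:u_i=u_j=u_k\}$. The real braid arrangement $\mathcal{B}_n$ consists of the hyperplanes $u_i=u_j$, $1\le i<j\le n$; its chambers are the connected components of the complement, namely the cones $u_{w_1}>u_{w_2}>\cdots>u_{w_n}$ for permutations $w$ of $[n]$, each a simplicial cone whose faces are obtained by turning some of the inequalities $u_{w_k}>u_{w_{k+1}}$ into equalities. The theorem of Davis–Januszkiewicz–Scott states: if $\mathcal{H}$ is a simplicial real hyperplane arrangement and $\mathcal{A}$ is an arrangement of codimension-$2$ subspaces in $\mathcal{H}$ intersecting every chamber in a codimension-$2$ subcomplex, then $\mathcal{M}_\mathcal{A}$ is $K(\pi,1)$. *)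

From HB Require Import structures.
From mathcomp Require Import all_boot all_order all_algebra all_fingroup.
From mathcomp Require Import reals.
Set Implicit Arguments. Unset Strict Implicit. Unset Printing Implicit Defensive.
Import Order.TTheory GRing.Theory Num.Theory.
Local Open Scope ring_scope.

Section Defs.
Variables (R : realType) (n : nat).

Definition pt := 'I_n -> R.

(* The (closed) face of the closure of the chamber
   u_{w_1} > u_{w_2} > ... > u_{w_n} of the braid arrangement B_n obtained by
   turning the inequalities at the positions j in S (between positions j and
   j+1, 0-indexed) into equalities.  Its codimension is #|S|. *)
Definition braid_face (w : 'S_n) (S : {set 'I_n}) (u : pt) : Prop :=
  forall j k : 'I_n, val k = (val j).+1 ->
    u (w k) <= u (w j) /\ (j \in S -> u (w j) = u (w k)).

Definition closed_chamber (w : 'S_n) : pt -> Prop := braid_face w set0.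

Definition face_positions (S : {set 'I_n}) : Prop :=
  forall j, j \in S -> ((val j).+1 < n)%N.

Definition arr_union (T : {set {set 'I_n}}) (u : pt) : Prop :=
  exists2 t, t \in T & forall i j, i \in t -> j \in t -> u i = u j.

(* X meets the closed chamber w in a codimension-2 subcomplex: the
   intersection is a union of faces of codimension >= 2, and it contains a
   face of codimension exactly 2. *)
Definition meets_in_codim2_subcomplex (w : 'S_n) (X : pt -> Prop) : Prop :=
  (exists F : {set {set 'I_n}},
     (forall S, S \in F -> face_positions S /\ (2 <= #|S|)%N) /\
     (forall u, (X u /\ closed_chamber w u) <->
                exists2 S, S \in F & braid_face w S u)) /\
  (exists S : {set 'I_n}, [/\ face_positions S, #|S| = 2%N &
                              forall u, braid_face w S u -> X u]).

End Defs.

(* If t = {w a, w b, w c} with a < b < c, a point of the chamber lies in U_t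
   exactly when every position of [a, c) is an equality: the chamber inequalities
   squeeze everything between u (w a) and u (w c).  Hence the arrangement meets
   the chamber in the faces whose equality set contains such a span, all of
   codimension c - a >= 2, and a codimension-2 face lies in some U_t only if
   c = a + 2, i.e. t is a consecutive triple of w.  For the latter it suffices
   to test a generic point of the face, one satisfying no equality beyond S. *)

From HB Require Import structures.
From mathcomp Require Import all_boot all_order all_algebra all_fingroup.
From mathcomp Require Import reals boolp zify.
Set Implicit Arguments. Unset Strict Implicit. Unset Printing Implicit Defensive.
Import Order.TTheory GRing.Theory Num.Theory.

Lemma ord_succ_ind n (r : rel 'I_n) : reflexive r -> transitive r ->
  forall i k : 'I_n, i <= k ->
  (forall j j' : 'I_n, val j' = (val j).+1 -> i <= j -> j' <= k -> r j j') ->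
  r i k.
Proof.
move=> rr rt i [k kn]; elim: k kn => [|k IH] kn /= ik step.
  by have -> : i = Ordinal kn by apply: val_inj; rewrite /=; lia.
case: (ltngtP i k.+1) ik => // [ilt | ieq] _; last first.
  by have -> : i = Ordinal kn by apply: val_inj.
have kn' : k < n := ltnW kn.
apply: (rt (Ordinal kn')); last exact: step.
by apply: IH => // j j' jj' ij j'k; apply: step => //; apply: leqW.
Qed.

Lemma card3_ord_sorted n (A : {set 'I_n}) : #|A| = 3 ->
  exists a b c : 'I_n, [/\ a < b, b < c & A = [set a; b; c]].
Proof.
move=> A3.
have srt : sorted (relpre val ltn) (enum A).
  rewrite /enum_mem -enumT; apply: sorted_filter.
    by move=> ? ? ?; apply: ltn_trans.
  by rewrite -sorted_map val_enum_ord iota_ltn_sorted.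
have := set_enum A; move: srt; rewrite cardE in A3.
case: (enum A) A3 => [|a [|b [|c []]]] //= _ /and3P [ab bc _] <-.
by exists a, b, c; split => //; apply/setP => x; rewrite !inE orbA.
Qed.

Lemma card3_perm_positions n (w : 'S_n) (t : {set 'I_n}) : #|t| = 3 ->
  exists a b c : 'I_n, [/\ a < b, b < c & t = [set w a; w b; w c]].
Proof.
move=> t3; have := @card3_ord_sorted n (w^-1 @: t)%g.
rewrite card_imset ?t3; last exact: perm_inj.
case=> // a [b [c [ab bc E]]]; exists a, b, c; split => //.
apply/setP => x.
have := mem_imset (f := (w^-1)%g) t x (@perm_inj _ (w^-1)%g).
by rewrite E !inE => <-; rewrite !(can2_eq (permKV w) (permK w)).
Qed.

Lemma card2_span_consecutive n (S : {set 'I_n}) (a b c : 'I_n) :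
  #|S| <= 2 -> a < b < c -> (forall j : 'I_n, a <= j < c -> j \in S) ->
  val b = (val a).+1 /\ val c = (val a).+2.
Proof.
move=> S2 /andP [ab bc] span.
have no_three (x y z : 'I_n) : x < y -> y < z -> z < c -> a <= x -> False.
  move=> xy yz zc ax; have: 3 <= #|S|; last by rewrite ltnNge S2.
  have -> : 3 = #|[set x; y; z]|.
    have neqF (p q : 'I_n) : p < q -> (p == q) = false := @ltn_eqF p q.
    by rewrite -setUA cardsU1 cards2 !inE !neqF // (ltn_trans xy yz).
  apply/subset_leq_card/subsetP => q; rewrite !inE => /orP [/orP [] | ] /eqP ->;
    apply: span; apply/andP; split; lia.
have ba : val b = (val a).+1.
  apply/eqP; rewrite eqn_leq ab andbT leqNgt; apply/negP => lt.
  apply: (no_three a (Ordinal (ltn_trans lt (ltn_ord b))) b).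
  - exact: ltnSn.
  - exact: lt.
  - exact: bc.
  - exact: leqnn.
have cb : val c = (val b).+1.
  apply/eqP; rewrite eqn_leq bc andbT leqNgt; apply/negP => lt.
  apply: (no_three a b (Ordinal (ltn_trans lt (ltn_ord c)))).
  - exact: ab.
  - exact: ltnSn.
  - exact: lt.
  - exact: leqnn.
by rewrite cb ba.
Qed.

Section BraidFaces.
Variables (R : realType) (n : nat) (w : 'S_n).
Implicit Types (S : {set 'I_n}) (u v : pt R n).

Lemma braid_face_chamber S u : braid_face w S u -> closed_chamber w u.
Proof. by move=> fu j k jk; split; [exact: (fu j k jk).1 | rewrite inE]. Qed.

Lemma closed_chamber_antitone u : closed_chamber w u ->
  forall i k : 'I_n, i <= k -> (u (w k) <= u (w i))%R.
Proof.
move=> cu i k ik; apply: (ord_succ_ind (r := fun j k => u (w k) <= u (w j))%R) => //.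
- by move=> y x z xy yz; apply: le_trans yz xy.
- by move=> j j' jj' _ _; exact: (cu j j' jj').1.
Qed.

Lemma braid_face_const S u : braid_face w S u -> forall i k : 'I_n, i <= k ->
  (forall j : 'I_n, i <= j < k -> j \in S) -> u (w i) = u (w k).
Proof.
move=> fu i k ik iS; apply/eqP.
apply: (ord_succ_ind (r := fun j k => u (w j) == u (w k))) => //.
- by move=> y x z /eqP -> /eqP ->.
- move=> j j' jj' ij j'k; apply/eqP/(fu j j' jj').2/iS.
  by rewrite ij -ltnS -jj'.
Qed.

Lemma closed_chamber_eq_gap u (i j j' k : 'I_n) : closed_chamber w u ->
  u (w i) = u (w k) -> val j' = (val j).+1 -> i <= j -> j' <= k ->
  u (w j) = u (w j').
Proof.
move=> cu eik jj' ij j'k; have anti := closed_chamber_antitone cu.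
apply/le_anti; rewrite (cu j j' jj').1 andbT.
by apply: le_trans (anti _ _ ij) _; rewrite eik; apply: anti.
Qed.

Definition eq_positions u : {set 'I_n} :=
  [set j | [exists k : 'I_n, (val k == (val j).+1) && (u (w j) == u (w k))]].

Lemma eq_positions_face_positions u : face_positions (eq_positions u).
Proof.
by move=> j; rewrite inE => /existsP [k /andP [/eqP <- _]]; apply: ltn_ord.
Qed.

Lemma braid_face_eq_positions u :
  closed_chamber w u -> braid_face w (eq_positions u) u.
Proof.
move=> cu j k jk; split; first exact: (cu j k jk).1.
rewrite inE => /existsP [k' /andP [/eqP k'j /eqP ->]].
by congr (u (w _)); apply: val_inj; rewrite k'j jk.
Qed.

Lemma eq_positions_span u (a c : 'I_n) : closed_chamber w u ->
  u (w a) = u (w c) -> forall j : 'I_n, a <= j < c -> j \in eq_positions u.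
Proof.
move=> cu eac j /andP [aj jc].
have jn : (val j).+1 < n := leq_ltn_trans jc (ltn_ord c).
rewrite inE; apply/existsP; exists (Ordinal jn); rewrite eqxx /=.
by apply/eqP/(closed_chamber_eq_gap cu eac).
Qed.

End BraidFaces.

Section FaceHeight.
Variables (n : nat) (S : {set 'I_n}).

Definition face_height (p : 'I_n) : nat :=
  #|[set j : 'I_n | (j < p) && (j \notin S)]|.

Lemma face_height_mono (p q : 'I_n) : p <= q -> face_height p <= face_height q.
Proof.
move=> pq; apply/subset_leq_card/subsetP => j.
by rewrite !inE => /andP [jp ->]; rewrite (leq_trans jp pq).
Qed.

Lemma face_height_succ (j k : 'I_n) : val k = (val j).+1 -> j \in S ->
  face_height j = face_height k.
Proof.
move=> kj jS; apply: eq_card => i; rewrite !inE kj ltnS [i <= _]leq_eqVlt.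
by case: eqP => [/val_inj -> | _] //=; rewrite jS ltnn.
Qed.

Lemma face_height_strict (i j k : 'I_n) : i <= j < k -> j \notin S ->
  face_height i < face_height k.
Proof.
move=> /andP [ij jk] jS; apply/proper_card/properP; split.
  apply/subsetP => x; rewrite !inE => /andP [xi ->].
  by rewrite (leq_trans xi) // (leq_trans ij) // ltnW.
by exists j; rewrite !inE ?jk ?jS // ltnNge ij.
Qed.

End FaceHeight.

Section GenericPoint.
Variables (R : realType) (n : nat) (w : 'S_n) (S : {set 'I_n}).

Definition generic_point : pt R n :=
  fun x => (- (face_height S (w^-1 x)%g)%:R)%R.

Lemma generic_point_face : braid_face w S generic_point.
Proof.
move=> j k kj; rewrite /generic_point !permK lerN2 ler_nat.
split; first by apply: face_height_mono; rewrite kj.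
by move=> jS; rewrite (face_height_succ kj jS).
Qed.

Lemma generic_point_eq_span (i k : 'I_n) :
  generic_point (w i) = generic_point (w k) ->
  forall j : 'I_n, i <= j < k -> j \in S.
Proof.
rewrite /generic_point !permK => /oppr_inj /eqP; rewrite eqr_nat => /eqP ik j ijk.
by apply: contraT => jS; move: (face_height_strict ijk jS); rewrite ik ltnn.
Qed.

End GenericPoint.

Section ArrangementFaces.
Variables (R : realType) (n : nat) (T : {set {set 'I_n}}) (w : 'S_n).
Hypothesis HT : forall t, t \in T -> #|t| = 3.
Implicit Types (S : {set 'I_n}) (u v : pt R n).

Lemma braid_face_sub_arr_union S (a b c : 'I_n) :
  [set w a; w b; w c] \in T -> a <= b <= c ->
  (forall j : 'I_n, a <= j < c -> j \in S) ->
  forall v, braid_face w S v -> arr_union T v.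
Proof.
move=> tT /andP [ab bc] span v fv; exists [set w a; w b; w c] => //.
have vab : v (w a) = v (w b).
  apply: (braid_face_const fv) => // j /andP [aj jb].
  by rewrite span ?aj ?(leq_trans jb).
have vbc : v (w b) = v (w c).
  apply: (braid_face_const fv) => // j /andP [bj jc].
  by rewrite span ?jc ?(leq_trans ab).
suff vt x : x \in [set w a; w b; w c] -> v x = v (w a) by move=> x y /vt -> /vt ->.
by rewrite !inE => /orP [/orP [] | ] /eqP ->; rewrite ?vab ?vbc.
Qed.

Lemma arr_union_chamber_faces : exists F : {set {set 'I_n}},
  (forall S, S \in F -> face_positions S /\ (2 <= #|S|)%N) /\
  (forall u, (arr_union T u /\ closed_chamber w u) <->
             exists2 S, S \in F & braid_face w S u).
Proof.
pose F := [set S | `[< [/\ face_positions S, (2 <= #|S|)%N &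
                          forall v, braid_face w S v -> arr_union T v] >]].
exists F; split => [S | u].
  by rewrite inE => /asboolP [].
split => [[[t tT ut] cu] | [S /[!inE] /asboolP [_ _ SX] fu]]; last first.
  by split; [apply: SX | apply: braid_face_chamber fu].
have [a [b [c [ab bc tE]]]] := card3_perm_positions w (HT tT).
have uac : u (w a) = u (w c) by apply: ut; rewrite tE !inE eqxx ?orbT.
have span := eq_positions_span cu uac.
exists (eq_positions w u); last exact: braid_face_eq_positions.
rewrite inE; apply/asboolP; split.
- exact: eq_positions_face_positions.
- apply: leq_trans (_ : 2 <= #|[set a; b]|) _; first by rewrite cards2 neq_ltn ab.
  apply/subset_leq_card/subsetP => j /set2P [] ->;
    by rewrite span ?leqnn ?ab ?(ltnW ab) ?(ltn_trans ab).
- apply: (braid_face_sub_arr_union (a := a) (b := b) (c := c)).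
  + by rewrite -tE.
  + by rewrite (ltnW ab) (ltnW bc).
  + exact: span.
Qed.

Lemma consecutive_triple_codim2_face (j k l : 'I_n) :
  val k = (val j).+1 -> val l = (val j).+2 -> [set w j; w k; w l] \in T ->
  exists S, [/\ face_positions S, #|S| = 2 &
                forall u, braid_face w S u -> arr_union T u].
Proof.
move=> kj lj tT; exists [set j; k]; split.
- by move=> i /set2P [] ->; [rewrite -kj | rewrite kj -lj]; apply: ltn_ord.
- by rewrite cards2 neq_ltn kj ltnSn.
- apply: braid_face_sub_arr_union tT _ _; first by rewrite kj lj leqnSn ltnW.
  move=> i /andP [ji]; rewrite lj ltnS leq_eqVlt ltnS => /orP [/eqP ik | ij].
    by apply/set2P; right; apply: val_inj; exact: etrans ik (esym kj).
  by apply/set2P; left; apply: val_inj; apply/eqP; rewrite eqn_leq ij ji.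
Qed.

Lemma codim2_face_consecutive_triple :
  (exists S, [/\ face_positions S, #|S| = 2 &
                 forall u, braid_face w S u -> arr_union T u]) ->
  exists j k l : 'I_n,
    [/\ val k = (val j).+1, val l = (val j).+2 & [set w j; w k; w l] \in T].
Proof.
case=> S [_ S2 SX]; have [t tT ut] := SX _ (generic_point_face R w S).
have [a [b [c [ab bc tE]]]] := card3_perm_positions w (HT tT).
have uac : generic_point R w S (w a) = generic_point R w S (w c).
  by apply: ut; rewrite tE !inE eqxx ?orbT.
have abc : a < b < c by rewrite ab.
have [ba ca] := card2_span_consecutive (eq_leq S2) abc (generic_point_eq_span uac).
by exists a, b, c; rewrite -tE.
Qed.

End ArrangementFaces.

Theorem corollary6p3 (R : realType) (n : nat) (T : {set {set 'I_n}})
  (HT : forall t, t \in T -> #|t| = 3) :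
  (forall w : 'S_n, meets_in_codim2_subcomplex w (@arr_union R n T)) <->
  (forall w : 'S_n, exists j k l : 'I_n,
      [/\ val k = (val j).+1, val l = (val j).+2 & [set w j; w k; w l] \in T]).
Proof.
split => H w.
  exact: codim2_face_consecutive_triple HT (H w).2.
have [j [k [l [kj lj tT]]]] := H w.
split; first exact: arr_union_chamber_faces.
exact: consecutive_triple_codim2_face kj lj tT.
Qed.
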